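(* Let $\theta\in\mathbb{F}_{q^3}^*$. The pencil of lines $T\mathcal S_\theta=\{TX: X\in\mathcal S_\theta\}$ consists entirely of Type II lines if $N(\theta)=1$, and otherwise consists entirely of Type III lines.
   Context: Let $q$ be a prime power, $\mathbb{F}_{q^3}^*=\mathbb{F}_{q^3}\setminus\{0\}$, and $N(x)=x^{q^2+q+1}$ the norm from $\mathbb{F}_{q^3}$ to $\mathbb{F}_q$. Points of $\mathrm{PG}(2,q^3)$ have homogeneous coordinates $(x,y,z)$ and lines $[a,b,c]$. Let $\phi$ be the collineation $(x,y,z)\mapsto(z^q,x^q,y^q)$, acting on lines by $[d,e,f]\mapsto[f^q,d^q,e^q]$, whose fixed points form the subplane $\mathcal P_{2,q}=\{(x,x^q,x^{q^2}):x\in\mathbb{F}_{q^3}^*\}$. A line has Type I, II or III according as its $\phi$-orbit is one line, three concurrent lines, or three non-concurrent lines (equivalently it meets $\mathcal P_{2,q}$ in $q+1$, $1$, or $0$ points). Let $T=(0,0,1)$. For $\theta\in\mathbb{F}_{q^3}^*$ let $\mathcal S_\theta=\{(x\theta,x^q,0):x\in\mathbb{F}_{q^3}^*\}$, a set of points on the line $[0,0,1]$. *)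

From HB Require Import structures.
From mathcomp Require Import all_boot all_order all_algebra.
Set Implicit Arguments. Unset Strict Implicit. Unset Printing Implicit Defensive.
Import GRing.Theory.
Local Open Scope ring_scope.

(* Homogeneous coordinates over a field F: a triple (x, y, z).
   Points and lines of PG(2,F) are represented by NONZERO triples;
   proportional triples represent the same point/line. *)
Definition triple (F : Type) := (F * F * F)%type.

Section PG.
Variable F : fieldType.

Definition c1 (v : triple F) : F := v.1.1.
Definition c2 (v : triple F) : F := v.1.2.
Definition c3 (v : triple F) : F := v.2.

Definition nonzero3 (v : triple F) : Prop := v <> (0, 0, 0).

Definition incident (p l : triple F) : Prop :=
  c1 l * c1 p + c2 l * c2 p + c3 l * c3 p = 0.

Definition same_proj (l m : triple F) : Prop :=
  exists k : F, k != 0 /\ m = (k * c1 l, k * c2 l, k * c3 l).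

Definition concurrent (l1 l2 l3 : triple F) : Prop :=
  exists p : triple F, nonzero3 p /\ incident p l1 /\ incident p l2 /\ incident p l3.

Variable q : nat.

Definition phiL (l : triple F) : triple F :=
  (c3 l ^+ q, c1 l ^+ q, c2 l ^+ q).

Definition typeI (l : triple F) : Prop := same_proj l (phiL l).
Definition typeII (l : triple F) : Prop :=
  ~ same_proj l (phiL l) /\ concurrent l (phiL l) (phiL (phiL l)).
Definition typeIII (l : triple F) : Prop :=
  ~ same_proj l (phiL l) /\ ~ concurrent l (phiL l) (phiL (phiL l)).

Definition norm3 (x : F) : F := x ^+ (q ^ 2 + q + 1)%N.

End PG.

Definition ptT (F : fieldType) : triple F := (0, 0, 1).
Definition ptS (F : fieldType) (q : nat) (theta x : F) : triple F :=
  (x * theta, x ^+ q, 0).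

(* A line through T = (0,0,1) is [a,b,0], and its phi-orbit is [a,b,0], [0,a^q,b^q],
   [b^(q^2),0,a^(q^2)]. These three lines are never equal, and the determinant of
   their coordinates is N(a) + N(b), so they are concurrent iff N(a) + N(b) = 0.
   If the line also passes through (x theta, x^q, 0), then a x theta = -b x^q;
   taking norms, and using N(x^q) = N(x) and N(-1) = -1, gives
   N(a) N(theta) = -N(b). Hence N(a) + N(b) = N(a) (1 - N(theta)) vanishes
   exactly when N(theta) = 1. *)
From mathcomp Require Import all_boot all_algebra.
From mathcomp Require Import finfield ring.
Set Implicit Arguments. Unset Strict Implicit. Unset Printing Implicit Defensive.
Import GRing.Theory.
Local Open Scope ring_scope.

Lemma det_mx33 (R : comNzRingType) (A : 'M[R]_3) :
  \det A = A 0 0 * (A 1 1 * A 2 2 - A 1 2 * A 2 1)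
         - A 0 1 * (A 1 0 * A 2 2 - A 1 2 * A 2 0)
         + A 0 2 * (A 1 0 * A 2 1 - A 1 1 * A 2 0).
Proof.
(* Re-index through [nat] so that the lifted ordinals of the Laplace expansion compute. *)
pose a (i j : nat) := A (inord i) (inord j).
have aE i j : A i j = a i j by rewrite /a !inord_val.
rewrite (expand_det_row _ 0) !big_ord_recl big_ord0 /cofactor.
rewrite !(expand_det_row _ 0) !big_ord_recl !big_ord0 /cofactor.
rewrite !det_mx11 !mxE !aE /bump /=.
change (1 %% 3)%N with 1%N; change ((1 + 1) %% 3)%N with 2%N.
ring.
Qed.

Section Norm.
Variables (F : fieldType) (q : nat).

Lemma norm3E (x : F) : norm3 q x = x * x ^+ q * x ^+ q ^+ q.
Proof. by rewrite /norm3 -exprM mulnn !exprD expr1 mulrC [_ * x ^+ q]mulrC mulrA. Qed.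

Lemma norm3M (x y : F) : norm3 q (x * y) = norm3 q x * norm3 q y.
Proof. exact: exprMn. Qed.

Lemma norm3_eq0 (x : F) : (norm3 q x == 0) = (x == 0).
Proof. by rewrite expf_eq0 addn1. Qed.

Lemma norm3N1 : norm3 q (-1 : F) = -1.
Proof. by rewrite /norm3 -signr_odd !oddD oddX /= addbb. Qed.

End Norm.

Lemma norm3_frobenius (F : finFieldType) (q : nat) (x : F) :
  #|F| = (q ^ 3)%N -> norm3 q (x ^+ q) = norm3 q x.
Proof.
move=> cardF; rewrite !norm3E.
have -> : x ^+ q ^+ q ^+ q = x.
  by rewrite -!exprM mulnn -expnS -cardF expf_card.
by rewrite mulrC mulrA.
Qed.

Lemma card_root_gt0 (F : finFieldType) (q : nat) : #|F| = (q ^ 3)%N -> (0 < q)%N.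
Proof.
by move=> cardF; have := card_finNzRing_gt1 F; rewrite cardF lt0n; apply: contraTneq => ->.
Qed.

Section Concurrency.
Variable F : fieldType.

Definition row3 (v : triple F) : 'rV[F]_3 := \row_(j < 3) [:: c1 v; c2 v; c3 v]`_j.

Definition lines_mx (l1 l2 l3 : triple F) : 'M[F]_3 :=
  \matrix_(i < 3) [:: row3 l1; row3 l2; row3 l3]`_i.

Definition pairing (p l : triple F) : F := c1 l * c1 p + c2 l * c2 p + c3 l * c3 p.

Lemma row3_eq0 (v : triple F) : (row3 v == 0) = (v == (0, 0, 0)).
Proof.
case: v => [[x y] z]; apply/eqP/eqP => [/rowP v0 | [-> -> ->]].
  by move: (v0 0) (v0 1) (v0 2); rewrite !mxE /c1 /c2 /c3 /= => -> -> ->.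
by apply/rowP => j; rewrite /row3 !mxE; case: j => -[|[|[|]]].
Qed.

Lemma mul_row3_lines_mx (p l1 l2 l3 : triple F) :
  row3 p *m (lines_mx l1 l2 l3)^T =
  \row_(i < 3) [:: pairing p l1; pairing p l2; pairing p l3]`_i.
Proof.
apply/rowP => i; rewrite /lines_mx !mxE !big_ord_recl big_ord0 !mxE /row3 /pairing.
by case: i => -[|[|[|//]]] ? /=; rewrite !mxE /=; ring.
Qed.

Lemma concurrentP (l1 l2 l3 : triple F) :
  concurrent l1 l2 l3 <-> \det (lines_mx l1 l2 l3) = 0.
Proof.
rewrite -det_tr; split.
  case=> p [p0 [h1 [h2 h3]]]; apply/eqP/det0P; exists (row3 p).
    by rewrite row3_eq0; apply/eqP.
  by rewrite mul_row3_lines_mx; apply/rowP => -[[|[|[|//]]] ?]; rewrite !mxE.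
move/eqP/det0P => [v v0 vM0].
have vE : v = row3 (v 0 0, v 0 1, v 0 2).
  apply/rowP => j; rewrite /row3 !mxE /c1 /c2 /c3.
  by case: j => -[|[|[|//]]] ? /=; congr (v 0 _); apply: val_inj.
rewrite vE mul_row3_lines_mx in vM0; move/rowP: vM0 => vM0.
exists (v 0 0, v 0 1, v 0 2); split; first by apply/eqP; rewrite -row3_eq0 -vE.
by move: (vM0 0) (vM0 1) (vM0 2); rewrite !mxE.
Qed.

End Concurrency.

Section OrbitThroughT.
Variables (F : fieldType) (q : nat).
Hypothesis q_gt0 : (0 < q)%N.

Lemma phiL_throughT (a b : F) : phiL q (a, b, 0) = (0, a ^+ q, b ^+ q).
Proof. by rewrite /phiL /c1 /c2 /c3 /= expr0n gtn_eqF. Qed.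

Lemma phiL2_throughT (a b : F) :
  phiL q (phiL q (a, b, 0)) = (b ^+ q ^+ q, 0, a ^+ q ^+ q).
Proof. by rewrite phiL_throughT /phiL /c1 /c2 /c3 /= expr0n gtn_eqF. Qed.

Lemma throughT_not_phiL_fixed (a b : F) :
  b != 0 -> ~ same_proj (a, b, 0) (phiL q (a, b, 0)).
Proof.
move=> b0 [k [_]]; rewrite phiL_throughT /c3 mulr0 => -[_ _ /eqP].
by rewrite expf_eq0 q_gt0 (negPf b0).
Qed.

Lemma det_lines_orbit_throughT (a b : F) :
  \det (lines_mx (a, b, 0) (phiL q (a, b, 0)) (phiL q (phiL q (a, b, 0))))
  = norm3 q a + norm3 q b.
Proof.
rewrite phiL2_throughT phiL_throughT det_mx33 /lines_mx /row3 !mxE /c1 /c2 /c3 /=.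
rewrite !norm3E; ring.
Qed.

Lemma concurrent_orbit_throughT (a b : F) :
  concurrent (a, b, 0) (phiL q (a, b, 0)) (phiL q (phiL q (a, b, 0)))
  <-> norm3 q a + norm3 q b = 0.
Proof. by rewrite concurrentP det_lines_orbit_throughT. Qed.

End OrbitThroughT.

Section PencilTS.
Variables (F : finFieldType) (q : nat) (theta : F).
Hypotheses (cardF : #|F| = (q ^ 3)%N) (theta0 : theta != 0).

Lemma norm3_line_TS (a b x : F) :
  x != 0 -> incident (ptS q theta x) (a, b, 0) ->
  norm3 q a * norm3 q theta = - norm3 q b.
Proof.
move=> x0; rewrite /incident /ptS /c1 /c2 /c3 /= mulr0 addr0 => /eqP.
rewrite addr_eq0 => /eqP /(congr1 (norm3 q)).
rewrite -mulN1r !norm3M norm3N1 norm3_frobenius // => Nabx.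
have Nx0 : norm3 q x != 0 by rewrite norm3_eq0.
apply: (mulIf Nx0); rewrite mulNr -mulN1r -Nabx; ring.
Qed.

Lemma orbit_line_TS (x : F) (l : triple F) :
  x != 0 -> nonzero3 l -> incident (ptT F) l -> incident (ptS q theta x) l ->
  ~ same_proj l (phiL q l) /\
  (concurrent l (phiL q l) (phiL q (phiL q l)) <-> norm3 q theta = 1).
Proof.
move=> x0; case: l => [[a b] c] l0 lT lS.
have c0 : c = 0 by move: lT; rewrite /incident /c1 /c2 /c3 /= !mulr0 !add0r mulr1.
subst c; have Nab := norm3_line_TS x0 lS.
have Ntheta0 : norm3 q theta != 0 by rewrite norm3_eq0.
have Na0 : norm3 q a != 0.
  rewrite norm3_eq0; apply/eqP => a0; apply: l0; rewrite a0; congr (_, _, _).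
  by apply/eqP; rewrite -(norm3_eq0 q) -oppr_eq0 -Nab a0 mulf_eq0 norm3_eq0 eqxx.
have b0 : b != 0 by rewrite -(norm3_eq0 q) -oppr_eq0 -Nab mulf_neq0.
have q_gt0 := card_root_gt0 cardF.
split; first exact: throughT_not_phiL_fixed.
rewrite concurrent_orbit_throughT //.
have -> : norm3 q b = - (norm3 q a * norm3 q theta) by rewrite Nab opprK.
rewrite -{1}[norm3 q a]mulr1 -mulrBr; split => [/eqP | ->]; last by rewrite subrr mulr0.
by rewrite mulf_eq0 (negPf Na0) subr_eq0 => /eqP.
Qed.

End PencilTS.

Theorem lemma2p3 (F : finFieldType) (q : nat) (hF : #|F| = (q ^ 3)%N)
  (theta : F) (htheta : theta != 0) :
  (norm3 q theta = 1 ->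
     forall x : F, x != 0 -> forall l : triple F, nonzero3 l ->
       incident (ptT F) l -> incident (ptS q theta x) l -> typeII q l) /\
  (norm3 q theta <> 1 ->
     forall x : F, x != 0 -> forall l : triple F, nonzero3 l ->
       incident (ptT F) l -> incident (ptS q theta x) l -> typeIII q l).
Proof.
split=> [Ntheta | Ntheta] x x0 l l0 lT lS;
  have [not_fixed concurrentE] := orbit_line_TS hF htheta x0 l0 lT lS.
  by split=> //; apply/concurrentE.
by split=> // /concurrentE.
Qed.
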